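(* For any non-negative integer $n$ there exists a function $\varphi\in\mathcal{S}(\mathbf{R})$, $\varphi\not\equiv 0$, satisfying the system of non-linear equations $$\int_{-\infty}^{+\infty} x^k \varphi(x)\,dx=\frac{\int_{-\infty}^{+\infty} x^k \varphi^2(x)\,dx}{\int_{-\infty}^{+\infty} \varphi^2(x)\,dx},\qquad k=0,1,2,\ldots,n.$$
   Context: $\mathcal{S}(\mathbf{R})$ denotes the Schwartz space of rapidly decreasing smooth real-valued functions on $\mathbf{R}$. *)

From Stdlib Require Import Reals.
From Coquelicot Require Import Coquelicot.
Open Scope R_scope.

Definition schwartz (f : R -> R) : Prop :=
  (forall (k : nat) (x : R), ex_derive_n f k x) /\
  (forall m k : nat, exists C : R, forall x : R, Rabs (x ^ m * Derive_n f k x) <= C).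

Definition integral_R (f : R -> R) (l : R) : Prop :=
  is_RInt_gen f (Rbar_locally m_infty) (Rbar_locally p_infty) l.

From Stdlib Require Import Reals Lra Lia FunctionalExtensionality Classical.
From Coquelicot Require Import Coquelicot.
Open Scope R_scope.

(* Let [h] be a small multiple of the [(n+1)]-st derivative of [exp (- x^2)]:
   integrating by parts, its moments of order [<= n] vanish.  The function
   [u = (1 - sqrt (1 + 4 h)) / 2] solves [u^2 = u + h], so [x^k u] and [x^k u^2]
   have the same integral [m_k] for [k <= n].  With [a = ∫ u^2 > 0] the function
   [phi = u / a] then has [∫ x^k phi = m_k / a] and
   [∫ x^k phi^2 / ∫ phi^2 = (m_k / a^2) / (1 / a) = m_k / a].
   Smoothness and decay of [u] come from a closure argument: [u] lies in the ideal
   generated by the functions [P(x) exp (- x^2)] in the algebra generated by them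
   and the bounded functions [1 / sqrt (1 + 4 h)], [1 / (1 + sqrt (1 + 4 h))];
   this ideal is closed under differentiation and all its elements decay rapidly. *)

Definition deriv_closed (A : (R -> R) -> Prop) : Prop :=
  forall f, A f -> exists f', A f' /\ forall x, is_derive f x (f' x).

Definition rapid_decay (f : R -> R) : Prop :=
  forall m : nat, exists C, forall x, Rabs (x ^ m * f x) <= C.

Section DerivClosed.

Variable A : (R -> R) -> Prop.
Hypothesis A_deriv : deriv_closed A.

Lemma deriv_closed_Derive_n f k :
  A f -> A (Derive_n f k) /\ forall x, ex_derive_n f k x.
Proof.
  intros Af; induction k as [|k [Ak _]].
  - split; [exact Af | intros; exact I].
  - destruct (A_deriv _ Ak) as [f' [Af' Df']].
    assert (E : Derive_n f (S k) = f').
    { apply functional_extensionality; intro x; apply is_derive_unique, Df'. }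
    split; [now rewrite E|].
    intro x; exists (f' x); apply Df'.
Qed.

Lemma deriv_closed_is_derive_n f k x :
  A f -> is_derive (Derive_n f k) x (Derive_n f (S k) x).
Proof.
  intros Af.
  destruct (A_deriv _ (proj1 (deriv_closed_Derive_n f k Af))) as [f' [_ Df']].
  simpl; rewrite (is_derive_unique _ _ _ (Df' x)); apply Df'.
Qed.

Lemma deriv_closed_continuous f x : A f -> continuous f x.
Proof.
  intros Af; destruct (A_deriv _ Af) as [f' [_ Df']].
  apply (@ex_derive_continuous R_AbsRing R_NormedModule); exists (f' x); apply Df'.
Qed.

Lemma schwartz_of_deriv_closed f :
  (forall g, A g -> rapid_decay g) -> A f -> schwartz f.
Proof.
  intros A_decay Af; split.
  - intros k; apply (deriv_closed_Derive_n f k Af).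
  - intros m k; apply A_decay, (deriv_closed_Derive_n f k Af).
Qed.

End DerivClosed.

Lemma increasing_of_is_derive F f :
  (forall x, is_derive F x (f x)) -> (forall x, 0 <= f x) ->
  forall x y, x <= y -> F x <= F y.
Proof.
  intros DF f_ge0 x y Hxy.
  destruct (Req_dec x y) as [->|Hne]; [lra|].
  destruct (MVT_gen F x y f) as [c [_ Hc]].
  - intros; apply DF.
  - intros z _; apply continuity_pt_filterlim, (@ex_derive_continuous R_AbsRing R_NormedModule).
    exists (f z); apply DF.
  - specialize (f_ge0 c); nra.
Qed.

Lemma increasing_bounded_is_lim_p_infty G M :
  (forall x y, x <= y -> G x <= G y) -> (forall x, G x <= M) ->
  exists L : R, is_lim G p_infty L.
Proof.
  intros G_incr G_le.
  set (E := fun r => exists x, r = G x).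
  destruct (completeness E) as [L [L_ub L_least]].
  - exists M; intros r [x ->]; apply G_le.
  - exists (G 0), 0; reflexivity.
  - exists L; apply is_lim_spec; intros eps.
    assert (Hx0 : exists x0, L - eps < G x0).
    { apply NNPP; intro Hn.
      assert (L <= L - eps) by
        (apply L_least; intros r [x ->]; apply Rnot_lt_le; intro; apply Hn; eauto).
      pose proof (cond_pos eps); lra. }
    destruct Hx0 as [x0 Hx0]; exists x0; intros x Hx.
    assert (G x <= L) by (apply L_ub; exists x; reflexivity).
    assert (G x0 <= G x) by (apply G_incr; lra).
    apply Rabs_lt_between'; lra.
Qed.

Lemma increasing_bounded_is_lim G M :
  (forall x y, x <= y -> G x <= G y) -> (forall x, Rabs (G x) <= M) ->
  exists Lm Lp : R, is_lim G m_infty Lm /\ is_lim G p_infty Lp.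
Proof.
  intros G_incr G_bnd.
  destruct (increasing_bounded_is_lim_p_infty G M) as [Lp HLp]; auto.
  { intro x; specialize (G_bnd x); apply Rabs_le_between in G_bnd; lra. }
  destruct (increasing_bounded_is_lim_p_infty (fun x => - G (- x)) M) as [L HL].
  { intros x y Hxy; apply Ropp_le_contravar, G_incr; lra. }
  { intro x; specialize (G_bnd (- x)); apply Rabs_le_between in G_bnd; lra. }
  exists (- L), Lp; split; [|exact HLp].
  apply (is_lim_ext (fun x => - (- G (- - x)))).
  { intro x; rewrite !Ropp_involutive; reflexivity. }
  apply (is_lim_opp (fun x => - G (- - x)) m_infty L).
  apply (is_lim_comp (fun x => - G (- x)) Ropp m_infty L p_infty); [exact HL| |].
  - apply (is_lim_opp _ _ m_infty), is_lim_id.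
  - exists 0; intros; discriminate.
Qed.

Lemma increasing_is_lim_bounds F (Lm Lp : R) x :
  (forall x y, x <= y -> F x <= F y) ->
  is_lim F m_infty Lm -> is_lim F p_infty Lp -> Lm <= F x <= Lp.
Proof.
  intros F_incr HLm HLp; split.
  - apply (filterlim_le (F := Rbar_locally' m_infty) F (fun _ => F x) Lm (F x)); auto.
    + exists x; intros y Hy; apply F_incr; lra.
    + apply is_lim_const.
  - apply (filterlim_le (F := Rbar_locally' p_infty) (fun _ => F x) F (F x) Lp); auto.
    + exists x; intros y Hy; apply F_incr; lra.
    + apply is_lim_const.
Qed.

Lemma integral_R_ext f g l : (forall x, f x = g x) -> integral_R f l -> integral_R g l.
Proof.
  intros E Hf; replace g with f; [exact Hf|]; apply functional_extensionality, E.
Qed.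

Lemma integral_R_plus f g a b :
  integral_R f a -> integral_R g b -> integral_R (fun x => f x + g x) (a + b).
Proof.
  intros Hf Hg.
  exact (is_RInt_gen_plus (Fa := Rbar_locally m_infty) (Fb := Rbar_locally p_infty) f g a b Hf Hg).
Qed.

Lemma integral_R_scal f c a :
  integral_R f a -> integral_R (fun x => c * f x) (c * a).
Proof.
  intros Hf.
  exact (is_RInt_gen_scal (Fa := Rbar_locally m_infty) (Fb := Rbar_locally p_infty) f c a Hf).
Qed.

Lemma integral_R_unique f a b : integral_R f a -> integral_R f b -> a = b.
Proof.
  intros Ha Hb; unfold integral_R in *.
  apply (@is_RInt_gen_unique R_CompleteNormedModule
           (Rbar_locally m_infty) (Rbar_locally p_infty) _ _) in Ha.
  apply (@is_RInt_gen_unique R_CompleteNormedModule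
           (Rbar_locally m_infty) (Rbar_locally p_infty) _ _) in Hb.
  congruence.
Qed.

Lemma integral_R_of_primitive F f (Lm Lp : R) :
  (forall x, is_derive F x (f x)) -> (forall x, continuous f x) ->
  is_lim F m_infty Lm -> is_lim F p_infty Lp -> integral_R f (Lp - Lm).
Proof.
  intros DF Cf HLm HLp.
  assert (E : Derive F = f).
  { apply functional_extensionality; intro x; apply is_derive_unique, DF. }
  unfold integral_R; rewrite <- E.
  apply (is_RInt_gen_Derive (Fa := Rbar_locally m_infty) (Fb := Rbar_locally p_infty)).
  - apply filter_forall; intros ab x _. exists (f x); apply DF.
  - apply filter_forall; intros ab x _. rewrite E; apply Cf.
  - exact HLm.
  - exact HLp.
Qed.

(* [G + F] and [G - F] are increasing, so [G + F] is bounded and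
   [F = (G + F) - G] is a difference of monotone bounded functions. *)
Lemma dominated_primitive_is_lim F f G g M :
  (forall x, is_derive F x (f x)) -> (forall x, is_derive G x (g x)) ->
  (forall x, Rabs (f x) <= g x) -> (forall x, Rabs (G x) <= M) ->
  exists Lm Lp : R, is_lim F m_infty Lm /\ is_lim F p_infty Lp.
Proof.
  intros DF DG f_le G_bnd.
  assert (incr_plus : forall x y, x <= y -> G x + F x <= G y + F y).
  { apply (increasing_of_is_derive _ (fun x => g x + f x)).
    { intro x; apply (is_derive_plus G F), DF; apply DG. }
    intro x; specialize (f_le x); apply Rabs_le_between in f_le; lra. }
  assert (incr_minus : forall x y, x <= y -> G x - F x <= G y - F y).
  { apply (increasing_of_is_derive _ (fun x => g x - f x)).
    { intro x; apply (is_derive_minus G F), DF; apply DG. }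
    intro x; specialize (f_le x); apply Rabs_le_between in f_le; lra. }
  assert (F_bnd : forall x, Rabs (G x + F x) <= 3 * M + Rabs (F 0)).
  { intro x; pose proof (G_bnd x) as Gx; pose proof (G_bnd 0) as G0.
    assert (F0 : - Rabs (F 0) <= F 0 <= Rabs (F 0)) by (split_Rabs; lra).
    apply Rabs_le_between in Gx, G0; apply Rabs_le_between.
    destruct (Rle_lt_dec 0 x) as [Hx|Hx].
    - pose proof (incr_plus 0 x Hx); pose proof (incr_minus 0 x Hx); lra.
    - apply Rlt_le in Hx; pose proof (incr_plus x 0 Hx); pose proof (incr_minus x 0 Hx); lra. }
  assert (G_incr : forall x y, x <= y -> G x <= G y).
  { apply (increasing_of_is_derive _ g DG).
    intro x; specialize (f_le x); pose proof (Rabs_pos (f x)); lra. }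
  destruct (increasing_bounded_is_lim _ _ incr_plus F_bnd) as [Hm [Hp [HHm HHp]]].
  destruct (increasing_bounded_is_lim _ _ G_incr G_bnd) as [Gm [Gp [HGm HGp]]].
  exists (Hm - Gm), (Hp - Gp); split.
  - apply (is_lim_ext (fun x => (G x + F x) - G x)); [intro; ring|].
    apply is_lim_minus'; assumption.
  - apply (is_lim_ext (fun x => (G x + F x) - G x)); [intro; ring|].
    apply is_lim_minus'; assumption.
Qed.

Lemma continuous_dominated_primitive f C :
  (forall x, continuous f x) -> (forall x, Rabs (f x) * (1 + x ^ 2) <= C) ->
  exists F (Lm Lp : R),
    (forall x, is_derive F x (f x)) /\ is_lim F m_infty Lm /\ is_lim F p_infty Lp.
Proof.
  intros Cf f_le.
  set (F := fun x => RInt f 0 x).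
  assert (DF : forall x, is_derive F x (f x)).
  { intro x; apply (is_derive_RInt f F 0); [|apply Cf].
    apply filter_forall; intro b.
    apply (@RInt_correct R_CompleteNormedModule), (@ex_RInt_continuous R_CompleteNormedModule).
    intros; apply Cf. }
  assert (C_ge0 : 0 <= C).
  { specialize (f_le 0); pose proof (Rabs_pos (f 0)); simpl in f_le; lra. }
  destruct (dominated_primitive_is_lim F f (fun x => C * atan x) (fun x => C * / (1 + x²))
              (C * PI)) as [Lm [Lp Hlim]]; [exact DF | | | | now exists F, Lm, Lp].
  - intro x; apply is_derive_scal, is_derive_atan.
  - intro x; assert (Hx : 0 < 1 + x²) by (pose proof (Rle_0_sqr x); lra).
    apply Rmult_le_reg_r with (1 + x²); [exact Hx|].
    rewrite Rmult_assoc, Rinv_l, Rmult_1_r by lra.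
    rewrite Rsqr_pow2; apply f_le.
  - intro x; pose proof (atan_bound x); pose proof PI_RGT_0.
    rewrite Rabs_mult, (Rabs_pos_eq C) by exact C_ge0.
    apply Rmult_le_compat_l; [exact C_ge0|]; apply Rabs_le; lra.
Qed.

Lemma rapid_decay_dominated f :
  rapid_decay f -> exists C, forall x, Rabs (f x) * (1 + x ^ 2) <= C.
Proof.
  intros f_decay; destruct (f_decay 0%nat) as [C0 H0]; destruct (f_decay 2%nat) as [C2 H2].
  exists (C0 + C2); intro x; specialize (H0 x); specialize (H2 x).
  rewrite pow_O, Rmult_1_l in H0.
  rewrite Rabs_mult, (Rabs_pos_eq (x ^ 2)) in H2 by apply pow2_ge_0.
  lra.
Qed.

Lemma rapid_decay_integrable f :
  rapid_decay f -> (forall x, continuous f x) -> exists l, integral_R f l.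
Proof.
  intros f_decay Cf; destruct (rapid_decay_dominated f f_decay) as [C f_le].
  destruct (continuous_dominated_primitive f C Cf f_le) as [F [Lm [Lp [DF [HLm HLp]]]]].
  exists (Lp - Lm); apply (integral_R_of_primitive F); assumption.
Qed.

(* If the integral vanished, the increasing primitive would be constant. *)
Lemma integral_R_pos f l x0 :
  rapid_decay f -> (forall x, continuous f x) -> (forall x, 0 <= f x) -> f x0 <> 0 ->
  integral_R f l -> 0 < l.
Proof.
  intros f_decay Cf f_ge0 f_x0 Hl; destruct (rapid_decay_dominated f f_decay) as [C f_le].
  destruct (continuous_dominated_primitive f C Cf f_le) as [F [Lm [Lp [DF [HLm HLp]]]]].
  rewrite (integral_R_unique _ _ _ Hl (integral_R_of_primitive F f Lm Lp DF Cf HLm HLp)).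
  assert (F_incr := increasing_of_is_derive F f DF f_ge0).
  assert (F_bnd : forall x, Lm <= F x <= Lp) by (intro; apply increasing_is_lim_bounds; auto).
  apply Rnot_le_lt; intro Hle; apply f_x0.
  rewrite <- (is_derive_unique _ _ _ (DF x0)); apply is_derive_unique.
  apply (is_derive_ext (fun _ => Lp)).
  - intro t; specialize (F_bnd t); lra.
  - apply (is_derive_const Lp x0).
Qed.

Lemma rapid_decay_is_lim f :
  rapid_decay f -> is_lim f m_infty 0 /\ is_lim f p_infty 0.
Proof.
  intros f_decay; destruct (f_decay 1%nat) as [C HC].
  assert (small : forall eps : posreal, forall x,
            (Rabs C + 1) / eps < Rabs x -> Rabs (f x - 0) < eps).
  { intros eps x Hx; pose proof (cond_pos eps); pose proof (Rle_abs C).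
    specialize (HC x); rewrite pow_1, Rabs_mult in HC; rewrite Rminus_0_r.
    assert (Rabs C + 1 < eps * Rabs x).
    { apply Rmult_lt_compat_l with (r := eps) in Hx; [|lra].
      unfold Rdiv in Hx; rewrite <- Rmult_assoc, (Rmult_comm eps), Rmult_assoc,
        Rinv_r, Rmult_1_r in Hx by lra; exact Hx. }
    apply Rnot_le_lt; intro Hn.
    assert (eps * Rabs x <= Rabs (f x) * Rabs x)
      by (apply Rmult_le_compat_r; [apply Rabs_pos | exact Hn]).
    lra. }
  split; apply is_lim_spec; intro eps;
    assert (0 < (Rabs C + 1) / eps)
      by (apply Rdiv_lt_0_compat; [pose proof (Rabs_pos C); lra | apply cond_pos]).
  - exists (- ((Rabs C + 1) / eps)); intros x Hx; apply small.
    rewrite (Rabs_left x); lra.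
  - exists ((Rabs C + 1) / eps); intros x Hx; apply small.
    rewrite (Rabs_pos_eq x); lra.
Qed.

Lemma integral_R_derive_rapid_decay F f :
  (forall x, is_derive F x (f x)) -> (forall x, continuous f x) -> rapid_decay F ->
  integral_R f 0.
Proof.
  intros DF Cf F_decay; destruct (rapid_decay_is_lim F F_decay) as [HLm HLp].
  replace 0 with (0 - 0) by ring; apply (integral_R_of_primitive F); assumption.
Qed.

Lemma is_derive_Rmult f g x df dg :
  is_derive f x df -> is_derive g x dg ->
  is_derive (fun y => f y * g y) x (df * g x + f x * dg).
Proof. intros Df Dg; apply (is_derive_mult f g); auto; intros; apply Rmult_comm. Qed.

Lemma exp_le_compat x y : x <= y -> exp x <= exp y.
Proof.
  intros Hxy; destruct (Rle_lt_or_eq_dec _ _ Hxy) as [Hlt | ->]; [|lra].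
  apply Rlt_le, exp_increasing, Hlt.
Qed.

Inductive polynomial : (R -> R) -> Prop :=
| poly_const c : polynomial (fun _ => c)
| poly_id : polynomial (fun x => x)
| poly_plus f g : polynomial f -> polynomial g -> polynomial (fun x => f x + g x)
| poly_mult f g : polynomial f -> polynomial g -> polynomial (fun x => f x * g x).

Lemma poly_pow m : polynomial (fun x => x ^ m).
Proof. induction m; simpl; [apply poly_const | apply (poly_mult _ _ poly_id IHm)]. Qed.

Lemma poly_deriv_closed : deriv_closed polynomial.
Proof.
  intros P HP; induction HP as [c | | f g _ [f' [Pf' Df]] _ [g' [Pg' Dg]]
                               | f g Pf [f' [Pf' Df]] Pg [g' [Pg' Dg]]].
  - exists (fun _ => 0); split; [apply poly_const | intro; apply (is_derive_const c)].
  - exists (fun _ => 1); split; [apply poly_const | intro; apply (is_derive_id x)].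
  - exists (fun x => f' x + g' x); split; [now apply poly_plus|].
    intro x; apply (is_derive_plus f g); auto.
  - exists (fun x => f' x * g x + f x * g' x); split.
    + apply poly_plus; apply poly_mult; auto.
    + intro x; apply is_derive_Rmult; auto.
Qed.

Lemma poly_exp_bound P :
  polynomial P -> exists A c, 0 <= c /\ forall x, Rabs (P x) <= A * exp (c * Rabs x).
Proof.
  assert (exp_mono : forall c d x, 0 <= d -> exp (c * Rabs x) <= exp ((c + d) * Rabs x)).
  { intros c d x Hd; apply exp_le_compat; pose proof (Rabs_pos x); nra. }
  induction 1 as [c | | f g _ [A1 [c1 [Hc1 H1]]] _ [A2 [c2 [Hc2 H2]]]
                 | f g _ [A1 [c1 [Hc1 H1]]] _ [A2 [c2 [Hc2 H2]]]].
  - exists (Rabs c), 0; split; [lra|]; intro x; rewrite Rmult_0_l, exp_0; lra.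
  - exists 1, 1; split; [lra|]; intro x; pose proof (exp_ineq1_le (1 * Rabs x)); lra.
  - exists (Rabs A1 + Rabs A2), (c1 + c2); split; [lra|]; intro x.
    specialize (H1 x); specialize (H2 x).
    pose proof (exp_mono c1 c2 x Hc2) as E1; pose proof (exp_mono c2 c1 x Hc1) as E2.
    rewrite (Rplus_comm c2) in E2.
    pose proof (exp_pos (c1 * Rabs x)); pose proof (exp_pos (c2 * Rabs x)).
    pose proof (Rle_abs A1); pose proof (Rle_abs A2).
    pose proof (Rabs_pos A1); pose proof (Rabs_pos A2).
    eapply Rle_trans; [apply Rabs_triang|]; nra.
  - exists (A1 * A2), (c1 + c2); split; [lra|]; intro x.
    rewrite Rabs_mult, Rmult_plus_distr_r, exp_plus.
    replace (A1 * A2 * (exp (c1 * Rabs x) * exp (c2 * Rabs x)))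
      with (A1 * exp (c1 * Rabs x) * (A2 * exp (c2 * Rabs x))) by ring.
    apply Rmult_le_compat; auto; apply Rabs_pos.
Qed.

Definition gauss (x : R) : R := exp (- (x * x)).

Lemma is_derive_gauss x : is_derive gauss x (-2 * x * gauss x).
Proof. unfold gauss; auto_derive; [exact I | ring]. Qed.

Definition gauss_poly (f : R -> R) : Prop :=
  exists P, polynomial P /\ forall x, f x = P x * gauss x.

Lemma gauss_poly_gauss : gauss_poly gauss.
Proof. exists (fun _ => 1); split; [apply poly_const | intro; ring]. Qed.

Lemma gauss_poly_plus f g : gauss_poly f -> gauss_poly g -> gauss_poly (fun x => f x + g x).
Proof.
  intros [P [HP Ef]] [Q [HQ Eg]]; exists (fun x => P x + Q x); split.
  - now apply poly_plus.
  - intro x; rewrite Ef, Eg; ring.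
Qed.

Lemma gauss_poly_mult_poly P f : polynomial P -> gauss_poly f -> gauss_poly (fun x => P x * f x).
Proof.
  intros HP [Q [HQ Ef]]; exists (fun x => P x * Q x); split.
  - now apply poly_mult.
  - intro x; rewrite Ef; ring.
Qed.

Lemma gauss_poly_deriv_closed : deriv_closed gauss_poly.
Proof.
  intros f [P [HP Ef]]; destruct (poly_deriv_closed P HP) as [P' [HP' DP]].
  exists (fun x => (P' x + -2 * x * P x) * gauss x); split.
  - exists (fun x => P' x + -2 * x * P x); split; [|reflexivity].
    apply poly_plus, poly_mult, HP; [exact HP' |].
    apply poly_mult; [apply poly_const | apply poly_id].
  - intro x; apply (is_derive_ext (fun y => P y * gauss y)); [intro; symmetry; apply Ef|].
    replace ((P' x + -2 * x * P x) * gauss x)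
      with (P' x * gauss x + P x * (-2 * x * gauss x)) by ring.
    apply is_derive_Rmult; [apply DP | apply is_derive_gauss].
Qed.

(* [c |x| - x^2 <= c^2 / 4] absorbs any exponential growth of the polynomial. *)
Lemma gauss_poly_rapid_decay f : gauss_poly f -> rapid_decay f.
Proof.
  intros [P [HP Ef]] m.
  destruct (poly_exp_bound _ (poly_mult _ _ (poly_pow m) HP)) as [A [c [Hc HA]]].
  exists (Rabs A * exp (c * c / 4)); intro x.
  assert (Hexp : c * Rabs x + - (x * x) <= c * c / 4).
  { pose proof (Rsqr_abs x); pose proof (pow2_ge_0 (Rabs x - c / 2)); unfold Rsqr in *; nra. }
  rewrite Ef, <- Rmult_assoc, Rabs_mult, (Rabs_pos_eq (gauss x)) by (apply Rlt_le, exp_pos).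
  apply Rle_trans with (A * exp (c * Rabs x) * gauss x).
  { apply Rmult_le_compat_r; [apply Rlt_le, exp_pos | apply HA]. }
  unfold gauss; rewrite Rmult_assoc, <- exp_plus.
  pose proof (exp_le_compat _ _ Hexp); pose proof (exp_pos (c * Rabs x + - (x * x))).
  pose proof (Rle_abs A); pose proof (Rabs_pos A); nra.
Qed.

Lemma rapid_decay_is_derive_0 f :
  rapid_decay f -> (forall x, is_derive f x 0) -> forall x, f x = 0.
Proof.
  intros f_decay Df.
  assert (f_const : forall x, f x = f 0).
  { intro x; destruct (Rtotal_order x 0) as [Hx | [-> | Hx]]; [| reflexivity |].
    - apply (eq_is_derive f x 0); [intros; apply Df | exact Hx].
    - symmetry; apply (eq_is_derive f 0 x); [intros; apply Df | exact Hx]. }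
  assert (Hlim : is_lim f p_infty (f 0)).
  { apply (is_lim_ext (fun _ => f 0)); [intro; symmetry; apply f_const | apply is_lim_const]. }
  apply is_lim_unique in Hlim.
  rewrite (is_lim_unique _ _ _ (proj2 (rapid_decay_is_lim f f_decay))) in Hlim.
  intro x; rewrite f_const; injection Hlim; auto.
Qed.

Lemma gauss_poly_continuous f x : gauss_poly f -> continuous f x.
Proof. apply (deriv_closed_continuous _ gauss_poly_deriv_closed). Qed.

Lemma gauss_poly_Derive_n j : gauss_poly (Derive_n gauss j).
Proof. apply (deriv_closed_Derive_n _ gauss_poly_deriv_closed), gauss_poly_gauss. Qed.

Lemma is_derive_Derive_n_gauss j x :
  is_derive (Derive_n gauss j) x (Derive_n gauss (S j) x).
Proof. apply (deriv_closed_is_derive_n _ gauss_poly_deriv_closed), gauss_poly_gauss. Qed.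

Lemma Derive_n_gauss_nonzero m : exists x, Derive_n gauss m x <> 0.
Proof.
  apply not_all_not_ex; intro Hm; assert (Hzero : forall x, Derive_n gauss m x = 0)
    by (intro x; apply NNPP, Hm); clear Hm.
  induction m as [|m IH].
  - specialize (Hzero 0); simpl in Hzero; unfold gauss in Hzero.
    pose proof (exp_pos (- (0 * 0))); lra.
  - apply IH, rapid_decay_is_derive_0; [apply gauss_poly_rapid_decay, gauss_poly_Derive_n|].
    intro x; rewrite <- (Hzero x); apply is_derive_Derive_n_gauss.
Qed.

(* Integration by parts, with [g_j = Derive_n gauss j]:
   [(x^(k+1) g_j)' = (k+1) x^k g_j + x^(k+1) g_(j+1)] has integral zero. *)
Lemma gauss_moments_vanish k j :
  (k < j)%nat -> integral_R (fun x => x ^ k * Derive_n gauss j x) 0.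
Proof.
  revert j; induction k as [|k IH]; intros [|j] Hkj; try lia.
  - apply (integral_R_ext (Derive_n gauss (S j))); [intro; simpl; ring|].
    apply (integral_R_derive_rapid_decay (Derive_n gauss j)).
    + intro; apply is_derive_Derive_n_gauss.
    + intro; apply gauss_poly_continuous, gauss_poly_Derive_n.
    + apply gauss_poly_rapid_decay, gauss_poly_Derive_n.
  - set (F' := fun x => INR (S k) * (x ^ k * Derive_n gauss j x)
                        + x ^ S k * Derive_n gauss (S j) x).
    assert (I1 : integral_R F' 0).
    { apply (integral_R_derive_rapid_decay (fun x => x ^ S k * Derive_n gauss j x)).
      - intro x; unfold F'.
        replace (INR (S k) * (x ^ k * Derive_n gauss j x) + x ^ S k * Derive_n gauss (S j) x)
          with (INR (S k) * 1 * x ^ Nat.pred (S k) * Derive_n gauss j x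
                + x ^ S k * Derive_n gauss (S j) x) by (simpl; ring).
        apply is_derive_Rmult; [apply (is_derive_pow (fun y => y)), (is_derive_id x) |].
        apply is_derive_Derive_n_gauss.
      - intro x; apply gauss_poly_continuous, gauss_poly_plus.
        + apply (gauss_poly_mult_poly (fun _ => INR (S k))); [apply poly_const|].
          apply gauss_poly_mult_poly; [apply poly_pow | apply gauss_poly_Derive_n].
        + apply gauss_poly_mult_poly; [apply poly_pow | apply gauss_poly_Derive_n].
      - apply gauss_poly_rapid_decay, gauss_poly_mult_poly, gauss_poly_Derive_n; apply poly_pow. }
    assert (I2 := integral_R_scal _ (- INR (S k)) _ (IH j ltac:(lia))).
    apply (integral_R_ext (fun x => F' x + - INR (S k) * (x ^ k * Derive_n gauss j x)));
      [intro; unfold F'; ring |].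
    replace 0 with (0 + - INR (S k) * 0) by ring; apply integral_R_plus; assumption.
Qed.

Lemma small_gauss_derivative n :
  exists h, gauss_poly h /\ (forall x, Rabs (h x) <= / 8) /\ (exists x, h x <> 0) /\
    forall k, (k <= n)%nat -> integral_R (fun x => x ^ k * h x) 0.
Proof.
  set (g := Derive_n gauss (S n)).
  destruct (gauss_poly_rapid_decay g (gauss_poly_Derive_n (S n)) 0%nat) as [C HC].
  assert (C1 : 0 < Rabs C + 1) by (pose proof (Rabs_pos C); lra).
  set (t := / (8 * (Rabs C + 1))).
  assert (t_pos : 0 < t) by (apply Rinv_0_lt_compat; lra).
  exists (fun x => t * g x); split; [|split; [|split]].
  - apply (gauss_poly_mult_poly (fun _ => t)); [apply poly_const | apply gauss_poly_Derive_n].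
  - intro x; specialize (HC x); rewrite pow_O, Rmult_1_l in HC.
    rewrite Rabs_mult, (Rabs_pos_eq t) by lra.
    apply Rle_trans with (t * (Rabs C + 1)).
    + apply Rmult_le_compat_l; [lra|]; pose proof (Rle_abs C); lra.
    + right; unfold t; field; lra.
  - destruct (Derive_n_gauss_nonzero (S n)) as [x0 Hx0]; exists x0.
    apply Rmult_integral_contrapositive_currified; [lra | exact Hx0].
  - intros k Hk; replace 0 with (t * 0) by ring.
    apply (integral_R_ext (fun x => t * (x ^ k * g x))); [intro; ring|].
    apply integral_R_scal, gauss_moments_vanish; lia.
Qed.

Lemma moment_identity_of_quadratic (u h : R -> R) k (m a : R) :
  (forall x, u x ^ 2 = u x + h x) ->
  integral_R (fun x => x ^ k * h x) 0 ->
  integral_R (fun x => x ^ k * u x) m ->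
  integral_R (fun x => u x ^ 2) a -> a <> 0 ->
  exists a' b c,
    integral_R (fun x => x ^ k * (u x / a)) a' /\
    integral_R (fun x => x ^ k * (u x / a) ^ 2) b /\
    integral_R (fun x => (u x / a) ^ 2) c /\ a' = b / c.
Proof.
  intros u_sq Ih Iu Iu2 a_neq0.
  exists (/ a * m), (/ a ^ 2 * (m + 0)), (/ a ^ 2 * a); split; [|split; [|split]].
  - apply (integral_R_ext (fun x => / a * (x ^ k * u x))); [intro; field; exact a_neq0|].
    apply integral_R_scal, Iu.
  - apply (integral_R_ext (fun x => / a ^ 2 * (x ^ k * u x + x ^ k * h x))).
    + intro x; replace ((u x / a) ^ 2) with (/ a ^ 2 * u x ^ 2) by (field; exact a_neq0).
      rewrite u_sq; ring.
    + apply integral_R_scal, integral_R_plus; assumption.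
  - apply (integral_R_ext (fun x => / a ^ 2 * u x ^ 2)); [intro; field; exact a_neq0|].
    apply integral_R_scal, Iu2.
  - field; exact a_neq0.
Qed.

Section SmallRoot.

Variable h : R -> R.
Hypothesis h_gauss : gauss_poly h.
Hypothesis h_small : forall x, Rabs (h x) <= / 8.

Definition sqrt_disc (x : R) : R := sqrt (1 + 4 * h x).
Definition inv_sqrt_disc (x : R) : R := / sqrt_disc x.
Definition inv_one_plus_sqrt_disc (x : R) : R := / (1 + sqrt_disc x).

(* The root [(1 - sqrt (1 + 4 h)) / 2] of [u^2 = u + h], written with the factor [h] in front. *)
Definition small_root (x : R) : R := h x * (-2 * inv_one_plus_sqrt_disc x).

Lemma sqrt_disc_facts x :
  0 < 1 + 4 * h x /\ sqrt_disc x * sqrt_disc x = 1 + 4 * h x /\ / 2 <= sqrt_disc x.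
Proof.
  specialize (h_small x); apply Rabs_le_between in h_small.
  assert (H1 : 0 < 1 + 4 * h x) by lra.
  assert (H2 : sqrt_disc x * sqrt_disc x = 1 + 4 * h x) by (apply sqrt_sqrt; lra).
  pose proof (sqrt_pos (1 + 4 * h x)); unfold sqrt_disc in *; repeat split; [lra | exact H2 | nra].
Qed.

Lemma small_root_sq x : small_root x ^ 2 = small_root x + h x.
Proof.
  destruct (sqrt_disc_facts x) as [_ [Hsq Hge]]; unfold small_root, inv_one_plus_sqrt_disc.
  replace (h x) with ((sqrt_disc x * sqrt_disc x - 1) / 4) by lra.
  field; lra.
Qed.

Section Derivatives.

Variable h' : R -> R.
Hypothesis h_deriv : forall x, is_derive h x (h' x).

Lemma is_derive_sqrt_disc x :
  is_derive sqrt_disc x (2 * h' x * inv_sqrt_disc x).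
Proof.
  destruct (sqrt_disc_facts x) as [Hpos [_ Hge]].
  assert (D : is_derive (fun y => 1 + 4 * h y) x (0 + 4 * h' x)).
  { apply (is_derive_plus (fun _ => 1) (fun y => 4 * h y)); [apply (is_derive_const 1 x)|].
    apply is_derive_scal, h_deriv. }
  replace (2 * h' x * inv_sqrt_disc x) with ((0 + 4 * h' x) / (2 * sqrt_disc x)).
  - exact (is_derive_sqrt _ _ _ D Hpos).
  - unfold inv_sqrt_disc; field; lra.
Qed.

Lemma is_derive_inv_sqrt_disc x :
  is_derive inv_sqrt_disc x
    (-2 * h' x * (inv_sqrt_disc x * (inv_sqrt_disc x * inv_sqrt_disc x))).
Proof.
  destruct (sqrt_disc_facts x) as [_ [_ Hge]].
  replace (-2 * h' x * (inv_sqrt_disc x * (inv_sqrt_disc x * inv_sqrt_disc x)))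
    with (- (2 * h' x * inv_sqrt_disc x) / sqrt_disc x ^ 2).
  - apply (is_derive_inv sqrt_disc); [apply is_derive_sqrt_disc | lra].
  - unfold inv_sqrt_disc; field; lra.
Qed.

Lemma is_derive_inv_one_plus_sqrt_disc x :
  is_derive inv_one_plus_sqrt_disc x
    (-2 * h' x * (inv_sqrt_disc x * (inv_one_plus_sqrt_disc x * inv_one_plus_sqrt_disc x))).
Proof.
  destruct (sqrt_disc_facts x) as [_ [_ Hge]].
  assert (D : is_derive (fun y => 1 + sqrt_disc y) x (0 + 2 * h' x * inv_sqrt_disc x)).
  { apply (is_derive_plus (fun _ => 1) sqrt_disc);
      [apply (is_derive_const 1 x) | apply is_derive_sqrt_disc]. }
  replace (-2 * h' x * (inv_sqrt_disc x * (inv_one_plus_sqrt_disc x * inv_one_plus_sqrt_disc x)))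
    with (- (0 + 2 * h' x * inv_sqrt_disc x) / (1 + sqrt_disc x) ^ 2).
  - apply (is_derive_inv _ _ _ D); lra.
  - unfold inv_one_plus_sqrt_disc; field; lra.
Qed.

End Derivatives.

Inductive bounded_alg : (R -> R) -> Prop :=
| balg_const c : bounded_alg (fun _ => c)
| balg_gauss_poly f : gauss_poly f -> bounded_alg f
| balg_inv_sqrt_disc : bounded_alg inv_sqrt_disc
| balg_inv_one_plus_sqrt_disc : bounded_alg inv_one_plus_sqrt_disc
| balg_plus f g : bounded_alg f -> bounded_alg g -> bounded_alg (fun x => f x + g x)
| balg_mult f g : bounded_alg f -> bounded_alg g -> bounded_alg (fun x => f x * g x).

Lemma bounded_alg_bounded b : bounded_alg b -> exists M, forall x, Rabs (b x) <= M.
Proof.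
  induction 1 as [c | f Hf | | | f g _ [M1 H1] _ [M2 H2] | f g _ [M1 H1] _ [M2 H2]].
  - exists (Rabs c); intro; lra.
  - destruct (gauss_poly_rapid_decay f Hf 0%nat) as [C HC]; exists C.
    intro x; specialize (HC x); rewrite pow_O, Rmult_1_l in HC; exact HC.
  - exists 2; intro x; destruct (sqrt_disc_facts x) as [_ [_ Hge]]; unfold inv_sqrt_disc.
    rewrite Rabs_pos_eq by (apply Rlt_le, Rinv_0_lt_compat; lra).
    replace 2 with (/ / 2) by field; apply Rinv_le_contravar; lra.
  - exists 1; intro x; destruct (sqrt_disc_facts x) as [_ [_ Hge]]; unfold inv_one_plus_sqrt_disc.
    rewrite Rabs_pos_eq by (apply Rlt_le, Rinv_0_lt_compat; lra).
    rewrite <- Rinv_1; apply Rinv_le_contravar; lra.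
  - exists (M1 + M2); intro x; eapply Rle_trans; [apply Rabs_triang|].
    specialize (H1 x); specialize (H2 x); lra.
  - exists (M1 * M2); intro x; rewrite Rabs_mult.
    apply Rmult_le_compat; auto; apply Rabs_pos.
Qed.

Lemma bounded_alg_deriv_closed : deriv_closed bounded_alg.
Proof.
  destruct (gauss_poly_deriv_closed h h_gauss) as [h' [h'_gauss h_deriv]].
  assert (cubic : forall f g, bounded_alg f -> bounded_alg g ->
            bounded_alg (fun x => -2 * h' x * (inv_sqrt_disc x * (f x * g x)))).
  { intros f g Hf Hg; apply balg_mult.
    - apply (balg_mult (fun _ => -2)); [apply balg_const | apply balg_gauss_poly, h'_gauss].
    - apply balg_mult; [apply balg_inv_sqrt_disc | apply balg_mult; assumption]. }
  intros b Hb; induction Hb as [c | f Hf | | | f g _ [f' [Hf' Df]] _ [g' [Hg' Dg]]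
                                | f g Hf [f' [Hf' Df]] Hg [g' [Hg' Dg]]].
  - exists (fun _ => 0); split; [apply balg_const | intro; apply (is_derive_const c)].
  - destruct (gauss_poly_deriv_closed f Hf) as [f' [Hf' Df]].
    exists f'; split; [apply balg_gauss_poly, Hf' | exact Df].
  - eexists; split; [apply cubic; apply balg_inv_sqrt_disc |].
    apply is_derive_inv_sqrt_disc, h_deriv.
  - eexists; split; [apply cubic; apply balg_inv_one_plus_sqrt_disc |].
    apply is_derive_inv_one_plus_sqrt_disc, h_deriv.
  - exists (fun x => f' x + g' x); split; [now apply balg_plus|].
    intro x; apply (is_derive_plus f g); auto.
  - exists (fun x => f' x * g x + f x * g' x); split.
    + apply balg_plus; apply balg_mult; auto.
    + intro x; apply is_derive_Rmult; auto.
Qed.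

Inductive decay_ideal : (R -> R) -> Prop :=
| ideal_mult f b : gauss_poly f -> bounded_alg b -> decay_ideal (fun x => f x * b x)
| ideal_plus f g : decay_ideal f -> decay_ideal g -> decay_ideal (fun x => f x + g x).

Lemma decay_ideal_ext f g : decay_ideal f -> (forall x, f x = g x) -> decay_ideal g.
Proof. intros Hf E; replace g with f; [exact Hf|]; apply functional_extensionality, E. Qed.

Lemma decay_ideal_mult_poly P f :
  polynomial P -> decay_ideal f -> decay_ideal (fun x => P x * f x).
Proof.
  intros HP; induction 1 as [f b Hf Hb | f g _ IHf _ IHg].
  - apply (decay_ideal_ext (fun x => (P x * f x) * b x)); [| intro; ring].
    apply ideal_mult; [apply gauss_poly_mult_poly |]; assumption.
  - apply (decay_ideal_ext (fun x => P x * f x + P x * g x)); [| intro; ring].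
    apply ideal_plus; assumption.
Qed.

Lemma decay_ideal_deriv_closed : deriv_closed decay_ideal.
Proof.
  intros f Hf; induction Hf as [f b Hf Hb | f g _ [f' [Hf' Df]] _ [g' [Hg' Dg]]].
  - destruct (gauss_poly_deriv_closed f Hf) as [f' [Hf' Df]].
    destruct (bounded_alg_deriv_closed b Hb) as [b' [Hb' Db]].
    exists (fun x => f' x * b x + f x * b' x); split.
    + apply ideal_plus; apply ideal_mult; assumption.
    + intro x; apply is_derive_Rmult; auto.
  - exists (fun x => f' x + g' x); split; [now apply ideal_plus|].
    intro x; apply (is_derive_plus f g); auto.
Qed.

Lemma decay_ideal_rapid_decay f : decay_ideal f -> rapid_decay f.
Proof.
  induction 1 as [f b Hf Hb | f g _ H1 _ H2]; intro m.
  - destruct (gauss_poly_rapid_decay f Hf m) as [C HC].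
    destruct (bounded_alg_bounded b Hb) as [M HM].
    exists (C * M); intro x; rewrite <- Rmult_assoc, Rabs_mult.
    apply Rmult_le_compat; auto; apply Rabs_pos.
  - destruct (H1 m) as [C1 HC1]; destruct (H2 m) as [C2 HC2]; exists (C1 + C2); intro x.
    rewrite Rmult_plus_distr_l; eapply Rle_trans; [apply Rabs_triang|].
    specialize (HC1 x); specialize (HC2 x); lra.
Qed.

Lemma decay_ideal_integrable f : decay_ideal f -> exists l, integral_R f l.
Proof.
  intros Hf; apply rapid_decay_integrable; [now apply decay_ideal_rapid_decay|].
  intro; apply (deriv_closed_continuous _ decay_ideal_deriv_closed), Hf.
Qed.

Lemma decay_ideal_small_root : decay_ideal small_root.
Proof.
  apply ideal_mult; [exact h_gauss|].
  apply (balg_mult (fun _ => -2)); [apply balg_const | apply balg_inv_one_plus_sqrt_disc].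
Qed.

Lemma decay_ideal_small_root_sq : decay_ideal (fun x => small_root x ^ 2).
Proof.
  apply (decay_ideal_ext (fun x => small_root x + h x * 1)); [| intro; rewrite small_root_sq; ring].
  apply ideal_plus, ideal_mult; [exact decay_ideal_small_root | exact h_gauss | apply balg_const].
Qed.

Lemma small_root_neq0 x : h x <> 0 -> small_root x <> 0.
Proof. intros hx E; pose proof (small_root_sq x) as Ex; rewrite E in Ex; lra. Qed.

End SmallRoot.

Theorem lemma1 (n : nat) :
  exists phi : R -> R,
    schwartz phi /\ (exists x : R, phi x <> 0) /\
    forall k : nat, (k <= n)%nat ->
      exists a b c : R,
        integral_R (fun x => x ^ k * phi x) a /\
        integral_R (fun x => x ^ k * (phi x) ^ 2) b /\
        integral_R (fun x => (phi x) ^ 2) c /\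
        a = b / c.
Proof.
  destruct (small_gauss_derivative n) as [h [h_gauss [h_small [[x0 h_x0] h_moments]]]].
  pose proof (decay_ideal_deriv_closed h h_gauss h_small) as ideal_deriv.
  pose proof (decay_ideal_rapid_decay h h_small) as ideal_decay.
  pose proof (decay_ideal_integrable h h_gauss h_small) as ideal_integrable.
  set (u := small_root h).
  assert (u_ideal : decay_ideal h u) by apply (decay_ideal_small_root h h_gauss).
  assert (u_x0 : u x0 <> 0) by now apply small_root_neq0.
  assert (u_sq_ideal := decay_ideal_small_root_sq h h_gauss h_small).
  destruct (ideal_integrable _ u_sq_ideal) as [a Ha].
  assert (a_pos : 0 < a).
  { apply (integral_R_pos (fun x => u x ^ 2) a x0); [now apply ideal_decay | | | | exact Ha].
    - intro; apply (deriv_closed_continuous _ ideal_deriv _ _ u_sq_ideal).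
    - intro; apply pow2_ge_0.
    - apply pow_nonzero, u_x0. }
  exists (fun x => u x / a); split; [|split].
  - apply (schwartz_of_deriv_closed _ ideal_deriv); [exact ideal_decay|].
    apply (decay_ideal_ext h (fun x => / a * u x)); [| intro; unfold Rdiv; ring].
    apply (decay_ideal_mult_poly h (fun _ => / a)); [apply poly_const | exact u_ideal].
  - exists x0; apply Rmult_integral_contrapositive_currified;
      [exact u_x0 | apply Rinv_neq_0_compat; lra].
  - intros k Hk.
    destruct (ideal_integrable (fun x => x ^ k * u x)) as [m Hm].
    { apply (decay_ideal_mult_poly h (fun x => x ^ k)); [apply poly_pow | exact u_ideal]. }
    apply (moment_identity_of_quadratic u h k m a (small_root_sq h h_small) (h_moments k Hk) Hm Ha).
    lra.
Qed.
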